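(* Let $n\ge3$, $m=n-1$, and consider $$(P):\ \sup\ x_{n-1}\ \text{ s.t. }\ x_1E_1+\sum_{i=2}^{n-1}x_i(E_i+E_{i-1,n})\preceq I_{n-1}\oplus 0_1,$$ with dual $(D)$. Then $\operatorname{val}(P)=0$ and $\operatorname{val}(D)=1$.
   Context: $E_{ij}\in\mathcal S^n$ is the symmetric matrix whose only nonzero entries are $1$ in positions $(i,j)$ and $(j,i)$; $E_i:=E_{ii}$. For $(P)$: $\sup\{c^Tx:\sum_ix_iA_i\preceq B\}$ the dual is $(D)$: $\inf\{B\bullet Y:A_i\bullet Y=c_i\ \forall i,\ Y\succeq0\}$, $S\bullet T=\operatorname{trace}(ST)$. *)

(* Scalars: an arbitrary real field R (the paper's reals are an instance). *)
From HB Require Import structures.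
From mathcomp Require Import all_boot all_order all_algebra.
Set Implicit Arguments. Unset Strict Implicit. Unset Printing Implicit Defensive.
Import Order.TTheory GRing.Theory Num.Theory.
Local Open Scope ring_scope.

Definition psd (R : realFieldType) (n : nat) (M : 'M[R]_n) : Prop :=
  M^T = M /\ forall v : 'cV[R]_n, 0 <= (v^T *m M *m v) 0 0.

Definition loewner_le (R : realFieldType) (n : nat) (S T : 'M[R]_n) : Prop :=
  psd (T - S).

Definition frob (R : realFieldType) (n : nat) (S T : 'M[R]_n) : R := \tr (S *m T).

(* E_{ij} with 1-based indices i j in {1..n}: 1 at (i,j) and (j,i), 0 elsewhere *)
Definition Emat (R : realFieldType) (n : nat) (i j : nat) : 'M[R]_n :=
  \matrix_(p < n, q < n)
    ((((p.+1 == i) && (q.+1 == j)) || ((p.+1 == j) && (q.+1 == i)))%:R).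

Definition primal_feasible (R : realFieldType) (n m : nat)
  (A : 'I_m -> 'M[R]_n) (B : 'M[R]_n) (x : 'I_m -> R) : Prop :=
  loewner_le (\sum_(i < m) x i *: A i) B.

Definition primal_obj (R : realFieldType) (m : nat) (c : 'I_m -> R) (x : 'I_m -> R) : R :=
  \sum_(i < m) c i * x i.

Definition dual_feasible (R : realFieldType) (n m : nat)
  (A : 'I_m -> 'M[R]_n) (c : 'I_m -> R) (Y : 'M[R]_n) : Prop :=
  (forall i, frob (A i) Y = c i) /\ psd Y.

Definition is_sup (R : realFieldType) (S : R -> Prop) (s : R) : Prop :=
  (forall y, S y -> y <= s) /\ (forall u, (forall y, S y -> y <= u) -> s <= u).

Definition is_inf (R : realFieldType) (S : R -> Prop) (s : R) : Prop :=
  (forall y, S y -> s <= y) /\ (forall u, (forall y, S y -> u <= y) -> u <= s).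

Definition primal_value (R : realFieldType) (n m : nat)
  (A : 'I_m -> 'M[R]_n) (B : 'M[R]_n) (c : 'I_m -> R) (v : R) : Prop :=
  is_sup (fun y => exists x, primal_feasible A B x /\ primal_obj c x = y) v.

Definition dual_value (R : realFieldType) (n m : nat)
  (A : 'I_m -> 'M[R]_n) (B : 'M[R]_n) (c : 'I_m -> R) (v : R) : Prop :=
  is_inf (fun y => exists Y, dual_feasible A c Y /\ frob B Y = y) v.

(* The concrete instance, m = n-1; constraint index k : 'I_(n-1) stands for paper index i = k+1.
   A_1 = E_1,  A_i = E_i + E_{i-1,n} (2 <= i <= n-1). *)
Definition exA (R : realFieldType) (n : nat) (k : 'I_(n.-1)) : 'M[R]_n :=
  if (k : nat) == 0%N then Emat R n 1 1
  else Emat R n k.+1 k.+1 + Emat R n k n.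

Definition exB (R : realFieldType) (n : nat) : 'M[R]_n :=
  \matrix_(p < n, q < n) (((p == q) && (p.+1 < n)%N)%:R).

Definition exc (R : realFieldType) (n : nat) (k : 'I_(n.-1)) : R :=
  ((k.+1 == n.-1)%N)%:R.

Arguments exA R n k : clear implicits.
Arguments exB R n : clear implicits.
Arguments exc R n k : clear implicits.

From mathcomp Require Import all_boot all_order all_algebra.
From mathcomp Require Import ring zify.
Set Implicit Arguments. Unset Strict Implicit. Unset Printing Implicit Defensive.
Import Order.TTheory GRing.Theory Num.Theory.
Local Open Scope ring_scope.

(* A zero diagonal entry of a positive semidefinite matrix forces its whole row to vanish.
   For the primal, the slack matrix has a zero (n,n) entry, so its (n-2,n) entry, which is
   -x_{n-1}, vanishes: every feasible x has objective 0, and x = 0 is feasible.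
   For the dual, A_1 . Y = c_1 = 0 gives Y_11 = 0; inductively Y_{i-1,i-1} = 0 kills
   Y_{i-1,n}, so A_i . Y = Y_ii.  Hence the first n-1 diagonal entries of every feasible Y
   are (0, ..., 0, 1) and B . Y = 1, while Y = E_{n-1} is feasible. *)

Lemma sumr_pred1_mull (R : pzSemiRingType) (I : finType) (a : I) (F : I -> R) :
  \sum_i (i == a)%:R * F i = F a.
Proof.
under eq_bigr => i _ do rewrite mulr_natl mulrb.
by rewrite -big_mkcond big_pred1_eq.
Qed.

Section Loewner.
Variables (R : realFieldType) (n : nat).
Implicit Types (M Y : 'M[R]_n) (a b : 'I_n).

Lemma bilinear_formE M (u v : 'cV[R]_n) :
  (u^T *m M *m v) 0 0 = \sum_i \sum_j u i 0 * M i j * v j 0.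
Proof.
rewrite mxE exchange_big; apply: eq_bigr => j _; rewrite mxE big_distrl.
by apply: eq_bigr => i _; rewrite mxE.
Qed.

Lemma bilinear_form_delta M a b :
  ((delta_mx a (0 : 'I_1))^T *m M *m delta_mx b (0 : 'I_1)) 0 0 = M a b.
Proof.
rewrite bilinear_formE (bigD1 a) //= [X in _ + X]big1 => [|i /negPf ia]; last first.
  by apply: big1 => j _; rewrite mxE ia !mul0r.
rewrite addr0 (bigD1 b) //= big1 => [|j /negPf jb]; last by rewrite !mxE jb andFb mulr0.
by rewrite !mxE !eqxx mul1r mulr1 addr0.
Qed.

Lemma psd_sym M a b : psd M -> M b a = M a b.
Proof. by case=> /matrixP /(_ a b); rewrite mxE. Qed.

(* The form at [s e_a + e_b] is [2 s M a b + M b b] once [M a a = 0]; for [M a b != 0]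
   a suitable [s] makes it [-1]. *)
Lemma psd_diag_eq0_row M a b : psd M -> M a a = 0 -> M a b = 0.
Proof.
move=> psdM Maa; have [<- //|_] := eqVneq a b.
apply/eqP; apply: contraT => Mab_neq0.
pose s := - (M b b + 1) / (2 * M a b).
have := psdM.2 (s *: delta_mx a 0 + delta_mx b 0).
rewrite [(_ + _)^T]linearD /= ![(s *: _)^T]linearZ /=.
rewrite !(mulmxDl, mulmxDr, =^~ scalemxAr, =^~ scalemxAl).
do 2 rewrite ![fun_of_matrix (_ + _) _ _]mxE ![fun_of_matrix (_ *: _) _ _]mxE.
rewrite !bilinear_form_delta Maa (psd_sym a b psdM).
have -> : s * (s * 0 + M a b) + (s * M a b + M b b) = - 1.
  by rewrite /s; field.
by rewrite oppr_ge0 ler10.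
Qed.

Lemma psd_diag_mx (d : 'rV[R]_n) : (forall i, 0 <= d 0 i) -> psd (diag_mx d).
Proof.
move=> d_ge0; split; first exact: tr_diag_mx.
move=> v; rewrite bilinear_formE; apply: sumr_ge0 => i _.
rewrite (bigD1 i) //= big1 => [|j /negPf ij]; last by rewrite mxE eq_sym ij mulr0 mul0r.
by rewrite mxE eqxx mulr1n addr0 mulrAC -expr2 mulr_ge0 ?sqr_ge0.
Qed.

Lemma frobDl (A B : 'M[R]_n) Y : frob (A + B) Y = frob A Y + frob B Y.
Proof. by rewrite /frob mulmxDl mxtraceD. Qed.

Lemma frob_delta_mx a b Y : frob (delta_mx a b) Y = Y b a.
Proof.
rewrite /frob /mxtrace -(sumr_pred1_mull a (fun i => Y b i)).
apply: eq_bigr => i _; rewrite mxE (bigD1 b) //= big1 => [|j /negPf jb].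
  by rewrite mxE eqxx andbT addr0.
by rewrite mxE jb andbF mul0r.
Qed.

Lemma frob_diag_mx (d : 'rV[R]_n) Y : frob (diag_mx d) Y = \sum_i d 0 i * Y i i.
Proof. by rewrite /frob mul_diag_mx /mxtrace; apply: eq_bigr => i _; rewrite mxE. Qed.

End Loewner.

Section Emat.
Variables (R : realFieldType) (n : nat).

Lemma Emat_diag (i : nat) (lt_i_n : (i < n.+1)%N) :
  Emat R n.+1 i.+1 i.+1 = delta_mx (inord i) (inord i).
Proof. by apply/matrixP => p q; rewrite !mxE !eqSS orbb -!val_eqE /= inordK. Qed.

Lemma Emat_offdiag (i j : nat) : (i < n.+1)%N -> (j < n.+1)%N -> i != j ->
  Emat R n.+1 i.+1 j.+1 = delta_mx (inord i) (inord j) + delta_mx (inord j) (inord i).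
Proof.
move=> lt_i_n lt_j_n neq_ij; apply/matrixP => p q; rewrite !mxE !eqSS.
rewrite -!val_eqE /= !inordK //.
have [-> | _] := eqVneq (p : nat) i; have [-> | _] := eqVneq (q : nat) j.
all: by rewrite ?eqxx ?(negPf neq_ij) ?(eq_sym j) ?(negPf neq_ij) /= ?orbF ?addr0 ?add0r.
Qed.

End Emat.

Lemma exB_diag (R : realFieldType) (n : nat) :
  exB R n = diag_mx (\row_p ((p.+1 < n)%N)%:R).
Proof. by apply/matrixP => p q; rewrite !mxE mulrb; case: eqP => [-> | _]. Qed.

(* Indices below are 0-based: [inord j : 'I_N] is the paper's j+1, so [inord m] is n-2
   and [ord_max] is n; the constraint [k : 'I_(n-1)] is the paper's A_(k+1). *)
Section DualityGap.
Variables (R : realFieldType) (m : nat).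
Local Notation N := m.+3.
Local Notation A := (exA R N).
Local Notation B := (exB R N).
Local Notation c := (exc R N).

Lemma exA_last_last k : A k ord_max ord_max = 0.
Proof.
rewrite /exA; case: ifP => _; rewrite !mxE //=.
have lt_k1_N : (k.+1 < N)%N := ltn_ord k.
by rewrite (gtn_eqF lt_k1_N) (gtn_eqF (ltnW lt_k1_N)) !andbF /= mulr0n addr0.
Qed.

Lemma exA_col_last k : A k (inord m) ord_max = (k == ord_max)%:R.
Proof.
have lt_k1_N : (k.+1 < N)%N := ltn_ord k.
have lt_m_N : (m < N)%N by lia.
rewrite /exA -val_eqE /=; case: ifP => [/eqP -> | _]; rewrite !mxE inordK //.
  by rewrite (gtn_eqF (_ : 1 < N)%N) // !andbF.
rewrite (gtn_eqF lt_k1_N) (ltn_eqF (_ : m.+1 < N)%N) // eqxx !andbF /=.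
by rewrite mulr0n add0r andbT orbF eq_sym.
Qed.

Lemma excE k : c k = (k == ord_max)%:R.
Proof. by rewrite /exc -val_eqE. Qed.

Lemma primal_obj_exc x : primal_obj c x = x ord_max.
Proof.
rewrite /primal_obj -(sumr_pred1_mull ord_max x).
by apply: eq_bigr => k _; rewrite excE.
Qed.

Lemma primal_feasible_last_eq0 x : primal_feasible A B x -> x ord_max = 0.
Proof.
have lt_m_N : (m < N)%N by lia.
rewrite /primal_feasible /loewner_le; set S := _ - _ => psdS.
have S_entry p q : S p q = B p q - \sum_i x i * A i p q.
  by rewrite !mxE summxE; under eq_bigr do rewrite mxE.
have S_last : S ord_max ord_max = 0.
  rewrite S_entry exB_diag !mxE ltnn mulr0n mul0rn big1 ?subr0 // => i _.
  by rewrite exA_last_last mulr0.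
have := psd_diag_eq0_row (inord m) psdS S_last.
rewrite (psd_sym (inord m) ord_max psdS) S_entry exB_diag !mxE.
under eq_bigr do rewrite exA_col_last mulrC.
rewrite sumr_pred1_mull -val_eqE /= inordK ?ltn_eqF //= mulr0n sub0r.
by move/eqP; rewrite oppr_eq0 => /eqP.
Qed.

Lemma exB_psd : psd B.
Proof. by rewrite exB_diag; apply: psd_diag_mx => i; rewrite mxE ler0n. Qed.

Lemma primal_value_ex : primal_value A B c 0.
Proof.
split=> [_ [x [feas_x <-]] | u ub_u].
  by rewrite primal_obj_exc primal_feasible_last_eq0.
apply: ub_u; exists (fun=> 0); split; last by rewrite primal_obj_exc.
rewrite /primal_feasible /loewner_le big1 ?subr0 => [|i _]; last exact: scale0r.
exact: exB_psd.
Qed.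

Lemma frob_exA0 Y : frob (A ord0) Y = Y (inord 0) (inord 0).
Proof. by rewrite /exA /= Emat_diag // frob_delta_mx. Qed.

Lemma frob_exA_succ j (lt_j1 : (j.+1 < m.+2)%N) Y :
  frob (A (Ordinal lt_j1)) Y =
  Y (inord j.+1) (inord j.+1) + (Y (inord m.+2) (inord j) + Y (inord j) (inord m.+2)).
Proof.
have lt_j1_N : (j.+1 < N)%N := leqW lt_j1.
rewrite /exA /= Emat_diag // Emat_offdiag ?ltn_eqF //; last exact: ltnW.
by rewrite !frobDl !frob_delta_mx.
Qed.

Lemma dual_feasible_diag Y : dual_feasible A c Y ->
  forall j, (j < m.+2)%N -> Y (inord j) (inord j) = (j == m.+1)%:R.
Proof.
case=> frobY psdY; elim=> [|j IHj] lt_j.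
  by have := frobY ord0; rewrite frob_exA0.
have Yjj : Y (inord j) (inord j) = 0 by rewrite IHj ?ltn_eqF // ltnW.
have Yj_last := psd_diag_eq0_row (inord m.+2) psdY Yjj.
have := frobY (Ordinal lt_j).
by rewrite frob_exA_succ (psd_sym (inord j) (inord m.+2) psdY) Yj_last !addr0.
Qed.

Lemma dual_feasible_obj Y : dual_feasible A c Y -> frob B Y = 1.
Proof.
move=> feasY; rewrite exB_diag frob_diag_mx big_ord_recr /= mxE ltnn mul0r addr0.
rewrite (eq_bigr (fun i => (i == ord_max)%:R * 1)) ?sumr_pred1_mull // => i _.
rewrite mxE -[widen_ord _ i]inord_val /= dual_feasible_diag // inordK; last exact: leqW.
by rewrite ltnS ltn_ord mul1r mulr1 -val_eqE.
Qed.

Definition exY : 'M[R]_N := diag_mx (\row_p ((p : nat) == m.+1)%:R).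

Lemma exY_feasible : dual_feasible A c exY.
Proof.
split=> [[[|j] lt_j] |]; last by apply: psd_diag_mx => i; rewrite mxE ler0n.
  rewrite (_ : Ordinal lt_j = ord0) ?frob_exA0; last exact: val_inj.
  by rewrite !mxE eqxx inordK.
have [lt_j_N lt_j1_N] : (j < N)%N /\ (j.+1 < N)%N by lia.
have lt_j_m2 : (j < m.+2)%N := ltnW lt_j.
rewrite frob_exA_succ !mxE -!val_eqE /= !inordK // eqxx.
by rewrite (gtn_eqF lt_j_m2) (ltn_eqF lt_j_m2) !mulr0n !addr0 mulr1n.
Qed.

Lemma dual_value_ex : dual_value A B c 1.
Proof.
split=> [_ [Y [feasY <-]] | u lb_u]; first by rewrite dual_feasible_obj.
by apply: lb_u; exists exY; split; [exact: exY_feasible | exact: dual_feasible_obj exY_feasible].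
Qed.

End DualityGap.

Theorem mainTheorem6 (R : realFieldType) (n : nat) (hn : (3 <= n)%N) :
  primal_value (exA R n) (exB R n) (exc R n) 0 /\
  dual_value (exA R n) (exB R n) (exc R n) 1.
Proof.
case: n hn => [|[|[|m]]] // _.
split; [exact: primal_value_ex | exact: dual_value_ex].
Qed.
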